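(* In the setting described in the context, every $(x_1,x_2,y_1,y_2)\in S(q,\kappa)$ satisfies \[\kappa^2a_1x_2y_1+a_2x_2y_2\equiv 0\pmod q,\] \[2a_2x_1y_1+\kappa^3a_1x_2y_1+3\kappa a_2x_2y_2\equiv 0\pmod{q^2},\] \[5\kappa^2a_1a_2x_1y_1+a_2^2x_1y_2+\kappa^5a_1^2x_2y_1+5\kappa^3a_1a_2x_2y_2\equiv 0\pmod{q^3}.\] Conversely, if $(x_1,x_2,y_1,y_2)\in\mathbb{Z}^4$ satisfies the two congruences \[a_2x_1\equiv\kappa^3a_1x_2\pmod q,\qquad \kappa^2a_1y_1+a_2y_2\equiv 0\pmod q,\] together with the three congruences displayed above, and $r=\gcd(y_1,y_2,q)$, then \[18(a_1x_1^2y_1^3+a_2x_2^2y_2^3)\equiv 0\pmod{q^3r^2}.\]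
   Context: Let $a_1,a_2,a_3$ be non-zero square-free pairwise coprime integers, let $B\ge 2$, and let $X_1,X_2,X_3,Y_1,Y_2,Y_3$ be powers of 2 not exceeding $2B$ with $X_i^2Y_i^3\le 32B/|a_i|$ for $i=1,2,3$. Let $S_0(B)$ be the set of 6-tuples of positive integers $(x_1,x_2,x_3,y_1,y_2,y_3)$ with $\tfrac12X_i<x_i\le X_i$ and $\tfrac12Y_i<y_i\le Y_i$ ($i=1,2,3$), satisfying $a_1x_1^2y_1^3+a_2x_2^2y_2^3+a_3x_3^2y_3^3=0$, $\gcd(x_1y_1,x_2y_2,x_3y_3)=\gcd(a_1a_2a_3,x_1x_2x_3y_1y_2y_3)=1$, and with $a_1y_1,a_2y_2,a_3y_3$ square-free. Let $q$ be a square-free integer with $\tfrac12Y_3<q\le Y_3$ and $\gcd(q,a_1a_2)=1$, and let $\kappa$ be an integer with $\gcd(\kappa,q)=1$. Define $S(q,\kappa)$ as the set of $(x_1,x_2,y_1,y_2)\in\mathbb{Z}^4$ with $x_1y_1+\kappa x_2y_2\equiv 0\pmod q$ such that $(x_1,x_2,x_3,y_1,y_2,q)\in S_0(B)$ for some integer $x_3$. *)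

From HB Require Import structures.
From mathcomp Require Import all_boot all_order all_algebra.
From mathcomp Require Import reals.
Set Implicit Arguments. Unset Strict Implicit. Unset Printing Implicit Defensive.
Import Order.TTheory GRing.Theory Num.Theory.
Local Open Scope ring_scope.

Definition sqfree (z : int) : Prop :=
  z != 0 /\ forall p : nat, prime p -> ~ ((p ^ 2)%:Z %| z)%Z.

Definition pow2 (X : nat) : Prop := exists k : nat, X = (2 ^ k)%N.

(* The set S_0(B): membership of (x1,x2,x3,y1,y2,y3), for fixed
   a1 a2 a3, B and boxes X_i, Y_i.  "1/2 X < x" is written X < 2 x. *)
Definition S0 (R : realType) (a1 a2 a3 : int) (B : R)
    (X1 X2 X3 Y1 Y2 Y3 : nat) (x1 x2 x3 y1 y2 y3 : int) : Prop :=
  [/\ 0 < x1, 0 < x2, 0 < x3, 0 < y1 & 0 < y2] /\ 0 < y3 /\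
  [/\ X1%:Z < 2 * x1, x1 <= X1%:Z, X2%:Z < 2 * x2 & x2 <= X2%:Z] /\
  [/\ X3%:Z < 2 * x3 & x3 <= X3%:Z] /\
  [/\ Y1%:Z < 2 * y1, y1 <= Y1%:Z, Y2%:Z < 2 * y2 & y2 <= Y2%:Z] /\
  [/\ Y3%:Z < 2 * y3 & y3 <= Y3%:Z] /\
  a1 * x1 ^+ 2 * y1 ^+ 3 + a2 * x2 ^+ 2 * y2 ^+ 3 + a3 * x3 ^+ 2 * y3 ^+ 3 = 0 /\
  gcdz (gcdz (x1 * y1) (x2 * y2)) (x3 * y3) = 1 /\
  gcdz (a1 * a2 * a3) (x1 * x2 * x3 * y1 * y2 * y3) = 1 /\
  [/\ sqfree (a1 * y1), sqfree (a2 * y2) & sqfree (a3 * y3)].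

Definition Sqk (R : realType) (a1 a2 a3 : int) (B : R)
    (X1 X2 X3 Y1 Y2 Y3 : nat) (q kappa : int) (x1 x2 y1 y2 : int) : Prop :=
  (q %| x1 * y1 + kappa * x2 * y2)%Z /\
  exists x3 : int, S0 a1 a2 a3 B X1 X2 X3 Y1 Y2 Y3 x1 x2 x3 y1 y2 q.

From HB Require Import structures.
From mathcomp Require Import all_boot all_order all_algebra.
From mathcomp Require Import reals.
From mathcomp Require Import ring.
Set Implicit Arguments. Unset Strict Implicit. Unset Printing Implicit Defensive.
Import Order.TTheory GRing.Theory Num.Theory.
Local Open Scope ring_scope.

(* With u = x1 y1, v = x2 y2, b = a2 y2 and c = a1 y1 the cubic form
   a1 x1^2 y1^3 + a2 x2^2 y2^3 is the diagonal quadratic form c u^2 + b v^2.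
   On S(q, kappa), q^3 divides it (as y3 = q), u = -kappa v (mod q) and v is
   prime to q.  Substitute u = t q - kappa v, then b = s q - kappa^2 c, and
   expand in powers of q: each further power of q dividing the form forces one
   more congruence on the q-adic digits, and the three displayed congruences
   are these, multiplied by powers of y1 and y2, which are prime to q.
   Conversely P = a2 x1 and Q = a2 y2 satisfy P = kappa^3 a1 x2 and
   Q = -kappa^2 a1 y1 (mod q), and the same expansion run backwards shows that
   q^3 divides 2 a2^2 times the cubic form.  Modulo the common factor r of y1,
   y2 and q the congruence for Q is unavailable, but the form is divisible by
   r^3 and one still gets r^5 | 18 times the form; as q is squarefree, q / r
   is prime to r, and the two divisibilities combine to q^3 r^2. *)

Lemma sqfree_coprimez (a b : int) : sqfree (a * b) -> coprimez a b.
Proof.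
case=> ab0 sqf; rewrite /coprimez /gcdz; apply: contraT => g_neq1.
have a0 : a != 0 by apply: contraNneq ab0 => ->; rewrite mul0r.
have g_gt1 : (1 < gcdn `|a| `|b|)%N.
  by rewrite ltn_neqAle eq_sym g_neq1 gcdn_gt0 absz_gt0 a0.
have [p p_pr p_g] := pdivP g_gt1.
case: (sqf p p_pr); rewrite dvdzE abszM expnS expn1.
by rewrite dvdn_mul // (dvdn_trans p_g) ?dvdn_gcdl ?dvdn_gcdr.
Qed.

Lemma coprimez_of_dvdz_add (k q u v : int) :
  coprimez (gcdz u v) q -> coprimez k q -> (q %| u + k * v)%Z ->
  coprimez u q /\ coprimez v q.
Proof.
move=> uvq kq quv.
have coprime_gcd (w w' : int) :
    (gcdz w q %| w')%Z -> coprimez (gcdz w w') q -> coprimez w q.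
  by move/gcdz_idPl; rewrite /coprimez gcdzAC => ->.
have gq_uv (w : int) : (gcdz w q %| u + k * v)%Z := dvdz_trans (dvdz_gcdr _ _) quv.
split.
- apply: (coprime_gcd _ v) => //.
  have gk : coprimez (gcdz u q) k.
    by rewrite coprimez_sym; apply: coprimez_dvdr (dvdz_gcdr u q) kq.
  rewrite -(Gauss_dvdzr _ gk) -(rpredDl _ (dvdz_gcdl u q)).
  exact: gq_uv.
- apply: (coprime_gcd _ u); last by rewrite gcdzC.
  by rewrite -(rpredDr _ (dvdz_mull k (dvdz_gcdl v q))); apply: gq_uv.
Qed.

Lemma dvdz_exp_mul2l n (q x : int) :
  q != 0 -> (q ^+ n.+1 %| q ^+ n * x)%Z = (q %| x)%Z.
Proof. by move=> q0; rewrite exprSr dvdz_mul2l // expf_neq0. Qed.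

Lemma dvdz_exp_weaken {m n : nat} {q x : int} :
  (q ^+ n %| x)%Z -> (m <= n)%N -> (q ^+ m %| x)%Z.
Proof. by move=> qx /(dvdz_exp2l q)/dvdz_trans; apply. Qed.

Lemma diag_quadratic_cube_congruence (k q u v b c t s w : int) :
  coprimez q v -> u = t * q - k * v -> b = s * q - k ^+ 2 * c ->
  s * v - 2 * c * k * t = w * q -> (q %| c * t ^+ 2 + v * w)%Z ->
  (q ^+ 3 %| (5 * k ^+ 2 * c + b) * b * u
             + (k ^+ 2 * c + 5 * b) * k ^+ 3 * c * v)%Z.
Proof.
move=> qv -> -> sw /dvdzP[z vw].
have /dvdzP[m km] : (q %| k ^+ 2 * c * (s * t + 2 * k * w))%Z.
  rewrite -(Gauss_dvdzr _ qv); apply/dvdzP.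
  exists (k ^+ 2 * c * (t * w + 2 * k * z)).
  have -> : v * (k ^+ 2 * c * (s * t + 2 * k * w))
          = k ^+ 2 * c * (t * (s * v - 2 * c * k * t)
                          + 2 * k * (c * t ^+ 2 + v * w)) by ring.
  by rewrite sw vw; ring.
apply/dvdzP; exists (m + s ^+ 2 * t - k * s * w).
have -> : (5 * k ^+ 2 * c + (s * q - k ^+ 2 * c)) * (s * q - k ^+ 2 * c)
            * (t * q - k * v)
          + (k ^+ 2 * c + 5 * (s * q - k ^+ 2 * c)) * k ^+ 3 * c * v
        = q ^+ 2 * (k ^+ 2 * c * s * t + s ^+ 2 * t * q
                    - k * s * (s * v - 2 * c * k * t))
          + 2 * k ^+ 3 * c * q * (s * v - 2 * c * k * t) by ring.
rewrite sw.
have -> : q ^+ 2 * (k ^+ 2 * c * s * t + s ^+ 2 * t * q - k * s * (w * q))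
          + 2 * k ^+ 3 * c * q * (w * q)
        = q ^+ 2 * (k ^+ 2 * c * (s * t + 2 * k * w)
                    + q * (s ^+ 2 * t - k * s * w)) by ring.
by rewrite km; ring.
Qed.

Lemma diag_quadratic_congruences (k q u v b c : int) :
  q != 0 -> coprimez q v -> (q %| u + k * v)%Z ->
  (q ^+ 3 %| c * u ^+ 2 + b * v ^+ 2)%Z ->
  [/\ (q %| k ^+ 2 * c + b)%Z,
      (q ^+ 2 %| 2 * b * u + k ^+ 3 * c * v + 3 * k * b * v)%Z &
      (q ^+ 3 %| (5 * k ^+ 2 * c + b) * b * u
                 + (k ^+ 2 * c + 5 * b) * k ^+ 3 * c * v)%Z].
Proof.
move=> q0 qv /dvdzP[t ut] Fq3.
have {}ut : u = t * q - k * v by rewrite -ut; ring.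
subst u.
have /dvdzP[s bs] : (q %| k ^+ 2 * c + b)%Z.
  rewrite -(Gauss_dvdzr _ (coprimezXr 2 qv)).
  have -> : v ^+ 2 * (k ^+ 2 * c + b) = c * (t * q - k * v) ^+ 2 + b * v ^+ 2
                                    - q * (c * t ^+ 2 * q - 2 * c * k * t * v) by ring.
  by rewrite rpredB ?dvdz_mulr // (dvdz_exp_weaken (m := 1) Fq3 isT).
have {}bs : b = s * q - k ^+ 2 * c by rewrite -bs; ring.
subst b.
have F_q1 : c * (t * q - k * v) ^+ 2 + (s * q - k ^+ 2 * c) * v ^+ 2
          = q * (q * (c * t ^+ 2) + v * (s * v - 2 * c * k * t)) by ring.
have /dvdzP[w sw] : (q %| s * v - 2 * c * k * t)%Z.
  have := dvdz_exp_weaken (m := 2) Fq3 isT.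
  rewrite F_q1 expr2 dvdz_mul2l // (rpredDl _ (dvdz_mulr _ (dvdzz q))).
  by rewrite (Gauss_dvdzr _ qv).
have F_q2 : c * (t * q - k * v) ^+ 2 + (s * q - k ^+ 2 * c) * v ^+ 2
          = q ^+ 2 * (c * t ^+ 2 + v * w) by rewrite F_q1 sw; ring.
have qz : (q %| c * t ^+ 2 + v * w)%Z by rewrite -(dvdz_exp_mul2l 2 _ q0) -F_q2.
split.
- by apply/dvdzP; exists s; ring.
- apply/dvdzP; exists (2 * s * t + k * w).
  have -> : 2 * (s * q - k ^+ 2 * c) * (t * q - k * v) + k ^+ 3 * c * v
            + 3 * k * (s * q - k ^+ 2 * c) * v
          = q * (2 * s * t * q + k * (s * v - 2 * c * k * t)) by ring.
  by rewrite sw; ring.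
- exact: diag_quadratic_cube_congruence qv erefl erefl sw qz.
Qed.

Lemma cube_dvd_of_congruences_PQ (k q A X Y P Q : int) :
  q != 0 -> (q %| P - k ^+ 3 * A * X)%Z -> (q %| k ^+ 2 * A * Y + Q)%Z ->
  (q ^+ 2 %| 2 * P * Y + k ^+ 3 * A * X * Y + 3 * k * X * Q)%Z ->
  (q ^+ 3 %| 5 * k ^+ 2 * A * Y * P + P * Q + k ^+ 5 * A ^+ 2 * X * Y
             + 5 * k ^+ 3 * A * X * Q)%Z ->
  (q ^+ 3 %| 2 * (A * Y ^+ 3 * P ^+ 2 + X ^+ 2 * Q ^+ 3))%Z.
Proof.
move=> q0 /dvdzP[c Pc] /dvdzP[s Qs] E2 E3.
have {}Pc : P = c * q + k ^+ 3 * A * X by rewrite -Pc; ring.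
have {}Qs : Q = s * q - k ^+ 2 * A * Y by rewrite -Qs; ring.
subst P Q.
have /dvdzP[e ce] : (q %| 2 * c * Y + 3 * k * X * s)%Z.
  move: E2; have -> : 2 * (c * q + k ^+ 3 * A * X) * Y + k ^+ 3 * A * X * Y
                      + 3 * k * X * (s * q - k ^+ 2 * A * Y)
                    = q * (2 * c * Y + 3 * k * X * s) by ring.
  by rewrite expr2 dvdz_mul2l.
have /dvdzP[f cf] : (q %| c * s + 2 * k ^+ 2 * A * e)%Z.
  move: E3; have -> : 5 * k ^+ 2 * A * Y * (c * q + k ^+ 3 * A * X)
          + (c * q + k ^+ 3 * A * X) * (s * q - k ^+ 2 * A * Y)
          + k ^+ 5 * A ^+ 2 * X * Y + 5 * k ^+ 3 * A * X * (s * q - k ^+ 2 * A * Y)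
        = q * (q * (c * s) + 2 * k ^+ 2 * A * (2 * c * Y + 3 * k * X * s)) by ring.
  rewrite ce (_ : q * (q * (c * s) + _) = q ^+ 2 * (c * s + 2 * k ^+ 2 * A * e)).
    by rewrite dvdz_exp_mul2l.
  by ring.
apply/dvdzP; exists (2 * X ^+ 2 * s ^+ 3
                     + A * Y * (e * (c * Y - 2 * k * X * s) + k * X * Y * f)).
have -> : 2 * (A * Y ^+ 3 * (c * q + k ^+ 3 * A * X) ^+ 2
               + X ^+ 2 * (s * q - k ^+ 2 * A * Y) ^+ 3)
        = 2 * q ^+ 3 * X ^+ 2 * s ^+ 3
          + 2 * q ^+ 2 * A * Y * (Y ^+ 2 * c ^+ 2 - 3 * k ^+ 2 * X ^+ 2 * s ^+ 2)
          + 2 * q * k ^+ 3 * A ^+ 2 * X * Y ^+ 2 * (2 * c * Y + 3 * k * X * s) by ring.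
rewrite ce.
have -> : 2 * q ^+ 3 * X ^+ 2 * s ^+ 3
          + 2 * q ^+ 2 * A * Y * (Y ^+ 2 * c ^+ 2 - 3 * k ^+ 2 * X ^+ 2 * s ^+ 2)
          + 2 * q * k ^+ 3 * A ^+ 2 * X * Y ^+ 2 * (e * q)
        = 2 * q ^+ 3 * X ^+ 2 * s ^+ 3
          + q ^+ 2 * A * Y * ((2 * c * Y + 3 * k * X * s) * (c * Y - 2 * k * X * s)
                              + k * X * Y * (c * s + 2 * k ^+ 2 * A * e)) by ring.
by rewrite ce cf; ring.
Qed.

Lemma square_dvd_of_congruences_PQ (k r A X Y P Q : int) :
  r != 0 -> coprimez r k -> coprimez r A -> (r %| P - k ^+ 3 * A * X)%Z ->
  (r %| 2 * P * Y + k ^+ 3 * A * X * Y + 3 * k * X * Q)%Z ->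
  (r ^+ 2 %| 5 * k ^+ 2 * A * Y * P + P * Q + k ^+ 5 * A ^+ 2 * X * Y
             + 5 * k ^+ 3 * A * X * Q)%Z ->
  (r ^+ 2 %| 18 * (A * Y ^+ 3 * P ^+ 2 + X ^+ 2 * Q ^+ 3))%Z.
Proof.
move=> r0 rk rA /dvdzP[c Pc] E2 E3.
have {}Pc : P = c * r + k ^+ 3 * A * X by rewrite -Pc; ring.
have [d Qd] : exists d, Q = d - k ^+ 2 * A * Y by exists (Q + k ^+ 2 * A * Y); ring.
subst P Q.
have /dvdzP[h dh] : (r %| 3 * X * d)%Z.
  rewrite -(Gauss_dvdzr _ rk).
  have -> : k * (3 * X * d) = 2 * (c * r + k ^+ 3 * A * X) * Y + k ^+ 3 * A * X * Y
                              + 3 * k * X * (d - k ^+ 2 * A * Y) - r * (2 * c * Y) by ring.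
  by rewrite rpredB ?dvdz_mulr.
have /dvdzP[m cm] : (r %| c * (4 * k ^+ 2 * A * Y + d) + 2 * k ^+ 3 * A * h)%Z.
  move: E3; have -> : 5 * k ^+ 2 * A * Y * (c * r + k ^+ 3 * A * X)
          + (c * r + k ^+ 3 * A * X) * (d - k ^+ 2 * A * Y)
          + k ^+ 5 * A ^+ 2 * X * Y + 5 * k ^+ 3 * A * X * (d - k ^+ 2 * A * Y)
        = r * (c * (4 * k ^+ 2 * A * Y + d)) + 2 * k ^+ 3 * A * (3 * X * d) by ring.
  rewrite dh (_ : r * _ + _ = r * (c * (4 * k ^+ 2 * A * Y + d) + 2 * k ^+ 3 * A * h)).
    by rewrite expr2 dvdz_mul2l.
  by ring.
have rk2A : coprimez r (k ^+ 2 * A) by rewrite coprimezMr (coprimezXr 2 rk) rA.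
have /dvdzP[n hn] : (r %| 6 * X * (k * h + 2 * c * Y))%Z.
  rewrite -(Gauss_dvdzr _ rk2A); apply/dvdzP; exists (3 * X * m - c * h).
  have -> : k ^+ 2 * A * (6 * X * (k * h + 2 * c * Y))
          = 3 * X * (c * (4 * k ^+ 2 * A * Y + d) + 2 * k ^+ 3 * A * h)
            - c * (3 * X * d) by ring.
  by rewrite cm dh; ring.
apply/dvdzP; exists (3 * k ^+ 3 * A ^+ 2 * Y ^+ 2 * n + 18 * A * Y ^+ 3 * c ^+ 2
                     - 6 * k ^+ 2 * A * Y * h ^+ 2 + 2 * d * h ^+ 2).
have -> : 18 * (A * Y ^+ 3 * (c * r + k ^+ 3 * A * X) ^+ 2
                + X ^+ 2 * (d - k ^+ 2 * A * Y) ^+ 3)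
        = 36 * k ^+ 3 * A ^+ 2 * X * Y ^+ 3 * c * r + 18 * A * Y ^+ 3 * c ^+ 2 * r ^+ 2
          + 18 * k ^+ 4 * A ^+ 2 * X * Y ^+ 2 * (3 * X * d)
          - 6 * k ^+ 2 * A * Y * (3 * X * d) ^+ 2 + 2 * d * (3 * X * d) ^+ 2 by ring.
rewrite dh.
have -> : 36 * k ^+ 3 * A ^+ 2 * X * Y ^+ 3 * c * r + 18 * A * Y ^+ 3 * c ^+ 2 * r ^+ 2
          + 18 * k ^+ 4 * A ^+ 2 * X * Y ^+ 2 * (h * r)
          - 6 * k ^+ 2 * A * Y * (h * r) ^+ 2 + 2 * d * (h * r) ^+ 2
        = r * (3 * k ^+ 3 * A ^+ 2 * Y ^+ 2 * (6 * X * (k * h + 2 * c * Y)))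
          + r ^+ 2 * (18 * A * Y ^+ 3 * c ^+ 2 - 6 * k ^+ 2 * A * Y * h ^+ 2
                      + 2 * d * h ^+ 2) by ring.
by rewrite hn; ring.
Qed.

Lemma dvdz_cube_mul_square_sqfree (q r n : int) :
  sqfree q -> (r %| q)%Z -> (q ^+ 3 %| n)%Z -> (r ^+ 5 %| n)%Z ->
  (q ^+ 3 * r ^+ 2 %| n)%Z.
Proof.
move=> sqf_q /dvdzP[s qsr]; rewrite qsr in sqf_q * => qn rn.
have sr : coprimez (s ^+ 3) (r ^+ 5).
  by apply/coprimezXl/coprimezXr/sqfree_coprimez.
rewrite (_ : _ * _ = s ^+ 3 * r ^+ 5); last by ring.
by rewrite Gauss_dvdz // rn andbT (dvdz_trans _ qn) // dvdz_exp2r // dvdz_mulr.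
Qed.

Lemma Sqk_coprime_cubic_dvd (R : realType) (a1 a2 a3 : int) (B : R)
    (X1 X2 X3 Y1 Y2 Y3 : nat) (q kappa x1 x2 y1 y2 : int) :
  coprimez kappa q -> Sqk a1 a2 a3 B X1 X2 X3 Y1 Y2 Y3 q kappa x1 x2 y1 y2 ->
  [/\ (q %| x1 * y1 + kappa * (x2 * y2))%Z, coprimez (x1 * y1) q,
      coprimez (x2 * y2) q
    & (q ^+ 3 %| a1 * x1 ^+ 2 * y1 ^+ 3 + a2 * x2 ^+ 2 * y2 ^+ 3)%Z].
Proof.
move=> kq [qlin [x3 [_ [_ [_ [_ [_ [_ [cubic_eq [gcd_eq _]]]]]]]]]].
rewrite -mulrA in qlin.
have uvq : coprimez (gcdz (x1 * y1) (x2 * y2)) q.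
  by move/eqP: gcd_eq; rewrite -/(coprimez _ _) coprimezMr => /andP[].
have [uq vq] := coprimez_of_dvdz_add uvq kq qlin.
split=> //; apply/dvdzP; exists (- (a3 * x3 ^+ 2)).
by move/eqP: cubic_eq; rewrite addr_eq0 => /eqP ->; ring.
Qed.

Section CubicForm.

Variables a1 a2 k x1 x2 y1 y2 : int.

Local Notation F := (a1 * x1 ^+ 2 * y1 ^+ 3 + a2 * x2 ^+ 2 * y2 ^+ 3).
Local Notation C1 := (a2 * x1 - k ^+ 3 * a1 * x2).
Local Notation L := (k ^+ 2 * a1 * y1 + a2 * y2).
Local Notation E1 := (k ^+ 2 * a1 * x2 * y1 + a2 * x2 * y2).
Local Notation E2 :=
  (2 * a2 * x1 * y1 + k ^+ 3 * a1 * x2 * y1 + 3 * k * a2 * x2 * y2).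
Local Notation E3 :=
  (5 * k ^+ 2 * a1 * a2 * x1 * y1 + a2 ^+ 2 * x1 * y2
   + k ^+ 5 * a1 ^+ 2 * x2 * y1 + 5 * k ^+ 3 * a1 * a2 * x2 * y2).

Lemma congruences_of_cubic_dvd (q : int) :
  q != 0 -> coprimez (x1 * y1) q -> coprimez (x2 * y2) q ->
  (q %| x1 * y1 + k * (x2 * y2))%Z -> (q ^+ 3 %| F)%Z ->
  [/\ (q %| E1)%Z, (q ^+ 2 %| E2)%Z & (q ^+ 3 %| E3)%Z].
Proof.
rewrite !(coprimez_sym _ q) => q0 qu qv qlin qF.
have [qy1 qy2] : coprimez q y1 /\ coprimez q y2.
  by move: qu qv; rewrite !coprimezMr => /andP[_ ->] /andP[_ ->].
have qF' : (q ^+ 3 %| a1 * y1 * (x1 * y1) ^+ 2 + a2 * y2 * (x2 * y2) ^+ 2)%Z.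
  by apply: dvdz_trans qF _; apply/dvdzP; exists 1; ring.
have [qL qE2 qE3] := diag_quadratic_congruences q0 qv qlin qF'.
split.
- rewrite (_ : E1 = x2 * (k ^+ 2 * (a1 * y1) + a2 * y2)); last by ring.
  exact: dvdz_mull.
- rewrite -(Gauss_dvdzr _ (coprimezXl 2 qy2)); apply: dvdz_trans qE2 _.
  by apply/dvdzP; exists 1; ring.
- rewrite -(Gauss_dvdzr _ (coprimezXl 3 qy1)) -(Gauss_dvdzr _ (coprimezXl 3 qy2)).
  by apply: dvdz_trans qE3 _; apply/dvdzP; exists 1; ring.
Qed.

Lemma cubic_dvd_of_congruences (q : int) :
  q != 0 -> coprimez q a2 -> (q %| C1)%Z -> (q %| L)%Z ->
  (q ^+ 2 %| E2)%Z -> (q ^+ 3 %| E3)%Z -> (q ^+ 3 %| 2 * F)%Z.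
Proof.
move=> q0 qa2 qC1 qL qE2 qE3.
rewrite -(Gauss_dvdzr _ (coprimezXl 3 (coprimezXr 2 qa2))).
apply: dvdz_trans (cube_dvd_of_congruences_PQ q0 qC1 qL _ _) _.
- by apply: dvdz_trans qE2 _; apply/dvdzP; exists 1; ring.
- by apply: dvdz_trans qE3 _; apply/dvdzP; exists 1; ring.
- by apply/dvdzP; exists 1; ring.
Qed.

Lemma cubic_dvd_of_common_factor (r : int) :
  r != 0 -> coprimez r k -> coprimez r a1 -> coprimez r a2 ->
  (r %| y1)%Z -> (r %| y2)%Z -> (r %| C1)%Z ->
  (r ^+ 2 %| E2)%Z -> (r ^+ 3 %| E3)%Z -> (r ^+ 5 %| 18 * F)%Z.
Proof.
move=> r0 rk ra1 ra2 /dvdzP[Y1 ->] /dvdzP[Y2 ->] rC1 rE2 rE3.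
have rE2' : (r %| 2 * (a2 * x1) * Y1 + k ^+ 3 * a1 * x2 * Y1
                  + 3 * k * x2 * (a2 * Y2))%Z.
  rewrite -(@dvdz_mul2l r _ _ r0) -expr2; apply: dvdz_trans rE2 _.
  by apply/dvdzP; exists 1; ring.
have rE3' : (r ^+ 2 %| 5 * k ^+ 2 * a1 * Y1 * (a2 * x1) + a2 * x1 * (a2 * Y2)
                      + k ^+ 5 * a1 ^+ 2 * x2 * Y1 + 5 * k ^+ 3 * a1 * x2 * (a2 * Y2))%Z.
  rewrite -(@dvdz_mul2l r _ _ r0) -exprS; apply: dvdz_trans rE3 _.
  by apply/dvdzP; exists 1; ring.
have rG := dvdz_mul (dvdzz (r ^+ 3)) (square_dvd_of_congruences_PQ r0 rk ra1 rC1 rE2' rE3').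
rewrite -(Gauss_dvdzr _ (coprimezXl 5 (coprimezXr 2 ra2))) (exprD r 3 2).
by apply: dvdz_trans rG _; apply/dvdzP; exists 1; ring.
Qed.

End CubicForm.

Theorem lemma13 (R : realType) (a1 a2 a3 : int) (B : R)
    (X1 X2 X3 Y1 Y2 Y3 : nat) (q kappa : int)
    (ha1 : sqfree a1) (ha2 : sqfree a2) (ha3 : sqfree a3)
    (hc12 : coprimez a1 a2) (hc13 : coprimez a1 a3) (hc23 : coprimez a2 a3)
    (hB : 2 <= B)
    (hX1 : pow2 X1) (hX2 : pow2 X2) (hX3 : pow2 X3)
    (hY1 : pow2 Y1) (hY2 : pow2 Y2) (hY3 : pow2 Y3)
    (hX1B : X1%:R <= 2 * B) (hX2B : X2%:R <= 2 * B) (hX3B : X3%:R <= 2 * B)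
    (hY1B : Y1%:R <= 2 * B) (hY2B : Y2%:R <= 2 * B) (hY3B : Y3%:R <= 2 * B)
    (hXY1 : ((X1 ^ 2 * Y1 ^ 3)%N)%:R <= 32 * B / `|a1%:~R|)
    (hXY2 : ((X2 ^ 2 * Y2 ^ 3)%N)%:R <= 32 * B / `|a2%:~R|)
    (hXY3 : ((X3 ^ 2 * Y3 ^ 3)%N)%:R <= 32 * B / `|a3%:~R|)
    (hq : sqfree q) (hqY : Y3%:Z < 2 * q) (hqY' : q <= Y3%:Z)
    (hqa : coprimez q (a1 * a2)) (hkq : coprimez kappa q) :
  (forall x1 x2 y1 y2 : int,
     Sqk a1 a2 a3 B X1 X2 X3 Y1 Y2 Y3 q kappa x1 x2 y1 y2 ->
     [/\ (q %| kappa ^+ 2 * a1 * x2 * y1 + a2 * x2 * y2)%Z,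
         (q ^+ 2 %| 2 * a2 * x1 * y1 + kappa ^+ 3 * a1 * x2 * y1
                     + 3 * kappa * a2 * x2 * y2)%Z &
         (q ^+ 3 %| 5 * kappa ^+ 2 * a1 * a2 * x1 * y1 + a2 ^+ 2 * x1 * y2
                     + kappa ^+ 5 * a1 ^+ 2 * x2 * y1
                     + 5 * kappa ^+ 3 * a1 * a2 * x2 * y2)%Z])
  /\
  (forall x1 x2 y1 y2 : int,
     (q %| a2 * x1 - kappa ^+ 3 * a1 * x2)%Z ->
     (q %| kappa ^+ 2 * a1 * y1 + a2 * y2)%Z ->
     (q %| kappa ^+ 2 * a1 * x2 * y1 + a2 * x2 * y2)%Z ->
     (q ^+ 2 %| 2 * a2 * x1 * y1 + kappa ^+ 3 * a1 * x2 * y1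
                 + 3 * kappa * a2 * x2 * y2)%Z ->
     (q ^+ 3 %| 5 * kappa ^+ 2 * a1 * a2 * x1 * y1 + a2 ^+ 2 * x1 * y2
                 + kappa ^+ 5 * a1 ^+ 2 * x2 * y1
                 + 5 * kappa ^+ 3 * a1 * a2 * x2 * y2)%Z ->
     (q ^+ 3 * (gcdz (gcdz y1 y2) q) ^+ 2
        %| 18 * (a1 * x1 ^+ 2 * y1 ^+ 3 + a2 * x2 ^+ 2 * y2 ^+ 3))%Z).
Proof.
have q0 : q != 0 by case: hq.
have [qa1 qa2] : coprimez q a1 /\ coprimez q a2 by apply/andP; rewrite -coprimezMr.
(* The unused hypothesis of the converse is x2 times the one before it. *)
split=> [x1 x2 y1 y2 S | x1 x2 y1 y2 qC1 qL _ qE2 qE3].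
- have [qlin uq vq qF] := Sqk_coprime_cubic_dvd hkq S.
  exact: congruences_of_cubic_dvd.
- set r := gcdz (gcdz y1 y2) q.
  have rq : (r %| q)%Z by apply: dvdz_gcdr.
  have r0 : r != 0 by rewrite gcdz_eq0 negb_and q0 orbT.
  have r_coprime (a : int) : coprimez q a -> coprimez r a.
    by apply: coprimez_dvdl.
  have qk : coprimez q kappa by rewrite coprimez_sym.
  apply: (dvdz_cube_mul_square_sqfree hq) => //.
  + apply: dvdz_trans (cubic_dvd_of_congruences q0 qa2 qC1 qL qE2 qE3) _.
    by apply/dvdzP; exists 9; ring.
  + apply: (cubic_dvd_of_common_factor r0 (r_coprime _ qk) (r_coprime _ qa1)
                                          (r_coprime _ qa2)).
    * exact: dvdz_trans (dvdz_gcdl _ _) (dvdz_gcdl _ _).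
    * exact: dvdz_trans (dvdz_gcdl _ _) (dvdz_gcdr _ _).
    * exact: dvdz_trans rq qC1.
    * exact: dvdz_trans (dvdz_exp2r 2 rq) qE2.
    * exact: dvdz_trans (dvdz_exp2r 3 rq) qE3.
Qed.
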